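(* For every signed composition $\alpha$ of $n$, $\Theta^{\pm}(\widetilde{S}_\alpha)=X^0_{|\alpha|}$, and for every $J\subseteq[n-1]$, $$\Theta(X_J)=2^{1+\#J}\sum_{F\in\mathring{\mathcal{F}}_n,\ F\subseteq J\cup(J+1)}\mathring{P}_F.$$ In particular, the image of $\Theta^{\pm}$ is $I_n^0$ and the image of $\Theta$ is $\mathring{\mathcal{P}}_n$.
   Context: Group algebras over $\mathbb{Q}$ with product composition. $B_n$: signed permutations $w=w_1\dots w_n$, values ordered $\cdots<-2<-1<1<2<\cdots$, $w_0=0$; $\mathrm{Des}(w)=\{i\in\{0,\dots,n-1\}:w_i>w_{i+1}\}$; $X_J=\sum_{\mathrm{Des}(w)\subseteq J}w$; $I_n^0=\mathrm{span}\{X_J:0\in J\}$. Signed composition of $n$: $\alpha=(a_1,\dots,a_k)$, $a_i\in\mathbb{Z}\setminus\{0\}$, $\sum|a_i|=n$; $|\alpha|=(|a_1|,\dots,|a_k|)$. $T_\alpha$: sum of $w\in B_n$ such that the successive intervals of $[n]$ of lengths $|a_1|,\dots,|a_k|$ are exactly the maximal intervals on which the sign of $w_j$ is constant and $|w_j|$ increasing, with signs those of the $a_i$. $\Omega(B_n)=\mathrm{span}\{T_\alpha\}$ (Mantaci–Reutenauer algebra, a subalgebra of $\mathbb{Q}B_n$ containing all $X_J$). $\widetilde{S}_\alpha$: sum of $w\in B_n$ such that on each of these intervals the entries $w_j$ are increasing and have the sign of the corresponding $a_i$. For an ordinary composition $\beta=(b_1,\dots,b_h)$ with associated subset $J_\beta=\{b_1,b_1+b_2,\dots,b_1+\dots+b_{h-1}\}$,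 $X^0_\beta=X_{\{0\}\cup J_\beta}$. In $\mathbb{Q}\mathfrak{S}_n$: $\mathrm{Des}(u)=\{i\in[n-1]:u_i>u_{i+1}\}$, $X_J=\sum_{\mathrm{Des}(u)\subseteq J}u$ for $J\subseteq[n-1]$, $\Sigma(A_{n-1})=\mathrm{span}\{X_J\}$; $\mathring{\mathrm{Peak}}(u)=\{i\in\{2,\dots,n-1\}:u_{i-1}<u_i>u_{i+1}\}$; $\mathring{\mathcal{F}}_n$: subsets of $\{2,\dots,n-1\}$ without two consecutive integers; $\mathring{P}_F=\sum_{\mathring{\mathrm{Peak}}(u)=F}u$; $\mathring{\mathcal{P}}_n=\mathrm{span}\{\mathring{P}_F\}$. $\Theta:\Sigma(A_{n-1})\to\Sigma(A_{n-1})$ is $\Theta(a)=2\mathring{P}_\emptyset\cdot a$ and $\Theta^{\pm}:\Omega(B_n)\to\Omega(B_n)$ is $\Theta^{\pm}(a)=X_{\{0\}}\cdot a$. $J+1=\{j+1:j\in J\}$. *)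

From HB Require Import structures.
From mathcomp Require Import all_boot all_order all_algebra all_fingroup.
Set Implicit Arguments. Unset Strict Implicit. Unset Printing Implicit Defensive.
Import Order.TTheory GRing.Theory Num.Theory.
Local Open Scope ring_scope.

Definition galg (G : finType) := {ffun G -> rat}.

Definition gmul (G : finType) (m : G -> G -> G) (a b : galg G) : galg G :=
  [ffun w => \sum_(u : G) \sum_(v : G) (if m u v == w then a u * b v else 0)].

Definition gscale (G : finType) (c : rat) (a : galg G) : galg G :=
  [ffun w => c * a w].

Definition gsum (G : finType) (P : pred G) : galg G :=
  [ffun w => if P w then 1 else 0].

Definition inspan (G : finType) (P : galg G -> Prop) (x : galg G) : Prop :=
  exists s : seq (rat * galg G),
    (forall p, p \in s -> P p.2) /\
    x = \sum_(p <- s) gscale p.1 p.2.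

(* u : 'S_n is the permutation with u_k = (u (k-1)) + 1 for k in 1..n.
   pval u k is u_k for k in 1..n (and 0 otherwise). *)
Definition pval n (u : 'S_n) (k : nat) : nat :=
  if k is k'.+1 then oapp (fun i : 'I_n => (u i).+1) 0%N (insub k') else 0%N.

(* Product composition: (u v)(k) = u (v k).  In mathcomp, (v * u) x = u (v x). *)
Definition Amul n (u v : 'S_n) : 'S_n := (v * u)%g.

(* Subsets of [n-1] = {1,...,n-1} are represented as sets J : {set 'I_n}
   with 0 \notin J; the element i stands for the integer val i. *)
Definition DesA n (u : 'S_n) : {set 'I_n} :=
  [set i : 'I_n | (0 < val i)%N && (pval u (val i) > pval u (val i).+1)%N].

Definition XA n (J : {set 'I_n}) : galg 'S_n :=
  gsum (fun u : 'S_n => DesA u \subset J).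

Definition PeakA n (u : 'S_n) : {set 'I_n} :=
  [set i : 'I_n | [&& (1 < val i)%N,
                     (pval u (val i).-1 < pval u (val i))%N &
                     (pval u (val i) > pval u (val i).+1)%N]].

(* F is in \mathring{F}_n: F subset of {2,...,n-1} without two consecutive
   integers. *)
Definition peakset n (F : {set 'I_n}) : bool :=
  [forall i in F, (1 < val i)%N] &&
  [forall i in F, forall j in F, val i != (val j).+1].

Definition PA n (F : {set 'I_n}) : galg 'S_n :=
  gsum (fun u : 'S_n => PeakA u == F).

Definition inJJ1 n (J : {set 'I_n}) (f : 'I_n) : bool :=
  (f \in J) || [exists j in J, (val j).+1 == val f].

Definition ThetaA n (a : galg 'S_n) : galg 'S_n :=
  gmul (@Amul n) (gscale 2 (PA set0)) a.

(* A signed permutation w is a pair (s, e): w_k = -(s(k-1)+1) if e(k-1),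
   and w_k = s(k-1)+1 otherwise, for k in 1..n. *)
Notation bperm n := ('S_n * {ffun 'I_n -> bool})%type.

(* w_k as an integer (w_0 = 0, and 0 for k > n). *)
Definition bval n (w : bperm n) (k : nat) : int :=
  if k is k'.+1 then
    oapp (fun i : 'I_n => if w.2 i then - ((w.1 i).+1 : int) else ((w.1 i).+1 : int))
         0 (insub k')
  else 0.

(* Product composition (u v)(k) = u (v (k)), extended by u(-k) = -u(k). *)
Definition Bmul n (u v : bperm n) : bperm n :=
  ((v.1 * u.1)%g, [ffun i => v.2 i (+) u.2 (v.1 i)]).

(* Descent set, a subset of {0,...,n-1}; i : 'I_n stands for val i. *)
Definition DesB n (w : bperm n) : {set 'I_n} :=
  [set i : 'I_n | bval w (val i).+1 < bval w (val i)].

Definition XB n (J : {set 'I_n}) : galg (bperm n) :=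
  gsum (fun w : bperm n => DesB w \subset J).

Definition signed_comp (n : nat) (al : seq int) : Prop :=
  all (fun a => a != 0) al /\ (\sum_(a <- al) `|a|)%N = n.

Definition psums (s : seq nat) : seq nat := scanl addn 0%N s.

(* 0-based index of the block of |al| containing position k (1 <= k <= n) *)
Definition blk (al : seq int) (k : nat) : nat :=
  count (fun c => c < k)%N (psums (map absz al)).

(* the sign (true = negative) of the block containing position k *)
Definition blksign (al : seq int) (k : nat) : bool :=
  nth 0 al (blk al k) < 0.

Definition bneg n (w : bperm n) (k : nat) : bool := bval w k < 0.

Definition TB n (al : seq int) : galg (bperm n) :=
  gsum (fun w : bperm n =>
    [forall i : 'I_n, bneg w (val i).+1 == blksign al (val i).+1] &&
    [forall i : 'I_n, ((val i).+1 < n)%N ==>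
       ((blk al (val i).+1 == blk al (val i).+2) ==
        ((bneg w (val i).+1 == bneg w (val i).+2) &&
         (`|bval w (val i).+1| < `|bval w (val i).+2|)%N))]).

Definition StB n (al : seq int) : galg (bperm n) :=
  gsum (fun w : bperm n =>
    [forall i : 'I_n, bneg w (val i).+1 == blksign al (val i).+1] &&
    [forall i : 'I_n, (((val i).+1 < n)%N && (blk al (val i).+1 == blk al (val i).+2))
        ==> (bval w (val i).+1 < bval w (val i).+2)]).

(* X^0_beta = X_{ {0} \cup J_beta } for an ordinary composition beta *)
Definition X0B n (be : seq nat) : galg (bperm n) :=
  XB [set i : 'I_n | (val i == 0)%N || (val i \in psums be)].

Definition X0only n : galg (bperm n) :=
  gsum (fun w : bperm n => [forall i in DesB w, val i == 0%N]).

Definition ThetaB n (a : galg (bperm n)) : galg (bperm n) :=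
  gmul (@Bmul n) (X0only n) a.

(* generators of Omega(B_n) and of I_n^0 *)
Definition isTgen n (x : galg (bperm n)) : Prop :=
  exists al, signed_comp n al /\ x = TB n al.
Definition isI0 n (x : galg (bperm n)) : Prop :=
  exists J : {set 'I_n}, [exists i in J, val i == 0%N] /\ x = XB J.
Definition isXA n (x : galg 'S_n) : Prop :=
  exists J : {set 'I_n}, (forall j, j \in J -> 0 < val j)%N /\ x = XA J.
Definition isPA n (x : galg 'S_n) : Prop :=
  exists F : {set 'I_n}, peakset F /\ x = PA F.

(* Left multiplication by [X_{0}] is computed fibre by fibre: given a signed
   permutation [x] and a sign vector [s], exactly one [v] with signs [s] makes the
   signed word of [x v^-1] increasing, namely the standardization of the word of [x]
   with its signs flipped by [s]; inside a block where [s] is constant, [v] ascends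
   exactly where [x] does.  This gives [Theta+-(S~_alpha) = X^0_|alpha|], and shows
   that [Theta+-(T_alpha)] is the sum of the [x] with prescribed ascents and descents,
   which inclusion-exclusion on the descents writes in terms of the [X_K], [0 \in K].
   Conversely such an [X_K] is a sum of [Theta+-(T_beta)], [beta] positive.

   For [S_n], embed [u] as [(u, +...+)] in [B_n] and sum the [B_n] identity over all
   sign vectors of [s]: [Theta (X_J) s] becomes the number of sign vectors [e] for
   which every nonzero descent of [(s, e)] lies in [J].  Each ascent required at a position
   where [s] ascends (resp. descends) forces the sign of its right (resp. left)
   entry, so the count is [2^(1 + #J)] when no entry is forced both ways, i.e. when
   every interior peak of [s] lies in [J \cup (J+1)], and [0] otherwise.  Finally
   [P_F] is recovered from [Theta (X_(F-1))] by induction on the sum of [F]. *)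

From Pilot Require Import Defs.
From HB Require Import structures.
From mathcomp Require Import all_boot all_order all_algebra all_fingroup.
From mathcomp Require Import zify.
(* so that [pval] is [Defs.pval] and not the projection of [perm] *)
Import Defs.
Import Order.TTheory GRing.Theory Num.Theory.
Local Open Scope ring_scope.
Set Implicit Arguments. Unset Strict Implicit. Unset Printing Implicit Defensive.

Section Span.
Variable G : finType.
Implicit Types (a b x y : galg G) (P Q : galg G -> Prop) (f : galg G -> galg G).

Lemma gscale1 a : gscale 1 a = a.
Proof. by apply/ffunP => w; rewrite !ffunE mul1r. Qed.

Lemma gscaleA c d a : gscale c (gscale d a) = gscale (c * d) a.
Proof. by apply/ffunP => w; rewrite !ffunE mulrA. Qed.

Lemma gscale_sum c (I : Type) (r : seq I) (F : I -> galg G) :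
  gscale c (\sum_(i <- r) F i) = \sum_(i <- r) gscale c (F i).
Proof.
elim: r => [|i r IH]; first by rewrite !big_nil; apply/ffunP => w; rewrite !ffunE mulr0.
by rewrite !big_cons -IH; apply/ffunP => w; rewrite !ffunE mulrDr.
Qed.

Lemma gsum_ext (P Q : pred G) : P =1 Q -> gsum P = gsum Q.
Proof. by move=> PQ; apply/ffunP => w; rewrite !ffunE PQ. Qed.

Lemma gsum_split (P Q R : pred G) : (forall w, P w = Q w && ~~ R w) ->
  gsum P = gsum Q + gscale (-1) (gsum (fun w => Q w && R w)).
Proof.
move=> PQR; apply/ffunP => w; rewrite !ffunE PQR.
by case: (Q w); case: (R w); rewrite /= ?mulr0 ?addr0 ?mulr1 ?subrr.
Qed.

Definition galg_linear f :=
  [/\ f 0 = 0, forall a b, f (a + b) = f a + f b & forall c a, f (gscale c a) = gscale c (f a)].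

Lemma gmul_linear (m : G -> G -> G) a : galg_linear (gmul m a).
Proof.
split=> [|b c|c b]; apply/ffunP => w; rewrite !ffunE.
- by apply: big1 => u _; apply: big1 => v _; rewrite ffunE mulr0; case: ifP.
- rewrite -big_split; apply: eq_bigr => u _; rewrite -big_split; apply: eq_bigr => v _.
  by rewrite ffunE; case: ifP; rewrite ?addr0 // mulrDr.
- rewrite mulr_sumr; apply: eq_bigr => u _; rewrite mulr_sumr; apply: eq_bigr => v _.
  by rewrite ffunE; case: ifP; rewrite ?mulr0 // mulrCA.
Qed.

Lemma inspan0 P : inspan P 0.
Proof. by exists [::]; rewrite big_nil. Qed.

Lemma inspan1 P x : P x -> inspan P x.
Proof.
by exists [:: (1, x)]; rewrite big_seq1 gscale1; split=> // p; rewrite inE => /eqP ->.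
Qed.

Lemma inspanD P x y : inspan P x -> inspan P y -> inspan P (x + y).
Proof.
move=> [s [Ps ->]] [t [Pt ->]]; exists (s ++ t); rewrite big_cat; split=> // p.
by rewrite mem_cat => /orP [/Ps|/Pt].
Qed.

Lemma inspanZ P c x : inspan P x -> inspan P (gscale c x).
Proof.
move=> [s [Ps ->]]; exists [seq (c * p.1, p.2) | p <- s]; split.
  by move=> p /mapP [q /Ps Pq ->].
by rewrite big_map gscale_sum; apply: eq_bigr => p _; rewrite gscaleA.
Qed.

Lemma inspan_sum P (I : finType) (A : pred I) (F : I -> galg G) :
  (forall i, A i -> inspan P (F i)) -> inspan P (\sum_(i | A i) F i).
Proof. exact: (big_ind (inspan P) (inspan0 P) (@inspanD P)). Qed.

Lemma inspan_linear P Q f : galg_linear f -> (forall x, P x -> inspan Q (f x)) ->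
  forall a, inspan P a -> inspan Q (f a).
Proof.
move=> [f0 fD fZ] PQ a [s [Ps ->]]; elim: s Ps => [|p s IH] Ps.
  by rewrite big_nil f0; apply: inspan0.
rewrite big_cons fD fZ; apply: inspanD; first by apply/inspanZ/PQ/Ps/mem_head.
by apply: IH => q qs; apply: Ps; rewrite inE qs orbT.
Qed.

Lemma inspan_sub P Q : (forall x, P x -> inspan Q x) -> forall y, inspan P y -> inspan Q y.
Proof. by apply: (@inspan_linear P Q id); split=> // c a; rewrite gscale1. Qed.

Definition image_of f P y := exists2 x, P x & y = f x.

Lemma inspan_image_ofP f P y : galg_linear f ->
  inspan (image_of f P) y -> exists a, inspan P a /\ y = f a.
Proof.
move=> [f0 fD fZ] [s [Ps ->]]; elim: s Ps => [|[c z] s IH] Ps.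
  by exists 0; rewrite big_nil f0; split=> //; apply: inspan0.
rewrite big_cons; have [x Px /= ->] := Ps _ (mem_head _ s).
have [|a [Pa ->]] := IH; first by move=> q qs; apply: Ps; rewrite inE qs orbT.
exists (gscale c x + a); rewrite fD fZ; split=> //.
by apply/inspanD/Pa/inspanZ/inspan1.
Qed.

Lemma linear_image_span P Q f : galg_linear f ->
    (forall x, P x -> inspan Q (f x)) -> (forall y, Q y -> inspan (image_of f P) y) ->
  forall y, (exists a, inspan P a /\ y = f a) <-> inspan Q y.
Proof.
move=> lin PQ QP y; split=> [[a [Pa ->]]|Qy]; first exact: inspan_linear Pa.
by apply: inspan_image_ofP => //; apply: inspan_sub Qy.
Qed.

End Span.

Lemma sum_pairE (T1 T2 : finType) (F : T1 * T2 -> rat) :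
  \sum_(w : T1 * T2) F w = \sum_(a : T1) \sum_(b : T2) F (a, b).
Proof. by rewrite pair_bigA; apply: eq_bigr => -[]. Qed.

Lemma prod_indicator (T : finType) (P : pred T) :
  \prod_(t : T) (if P t then 1 else 0 : rat) = if [forall t, P t] then 1 else 0.
Proof.
case: (boolP [forall t, P t]) => [/forallP allP|/forallPn [t /negbTE Pt]].
  by apply: big1 => t _; rewrite allP.
by rewrite (bigD1 t) //= Pt mul0r.
Qed.

Lemma sum_ord_shift n (f : nat -> nat) : f 0%N = 0%N -> f n = 0%N ->
  (\sum_(p < n) f p.+1 = \sum_(p < n) f p)%N.
Proof.
move=> f0 fn; rewrite -(big_mkord xpredT (fun p => f p.+1)) -(big_mkord xpredT f).
have : (\sum_(0 <= i < n.+1) f i = f 0%N + \sum_(0 <= i < n) f i.+1)%N.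
  by rewrite big_nat_recl.
by rewrite big_nat_recr //= f0 fn add0n addn0 => ->.
Qed.

Lemma sum_nat_indicator (T : finType) (P : pred T) :
  (\sum_(t : T) (P t : nat))%N = #|[set t | P t]|.
Proof. by rewrite -sum1dep_card [RHS]big_mkcond; apply: eq_bigr => t _; case: (P t). Qed.

Lemma sum_if_eq (T : finType) (P : pred T) (t : T) :
  \sum_(F | P F) (if t == F then 1 else 0 : rat) = if P t then 1 else 0.
Proof.
case: (boolP (P t)) => Pt.
  by rewrite (bigD1 t) //= eqxx big1 ?addr0 // => F /andP [_ /negbTE]; rewrite eq_sym => ->.
by apply: big1 => F PF; case: eqP => // tF; move: Pt; rewrite tF PF.
Qed.

Lemma count_ltS (s : seq nat) k :
  count (fun c => (c < k.+1)%N) s = (count (fun c => (c < k)%N) s + count (pred1 k) s)%N.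
Proof. by elim: s => //= c s ->; rewrite ltnS leq_eqVlt; case: ltngtP => /=; lia. Qed.

Definition gaps (a : nat) (c : seq nat) : seq nat := pairmap (fun x y => y - x)%N a c.

Lemma scanl_gaps a c : path leq a c -> scanl addn a (gaps a c) = c.
Proof. by elim: c a => //= b c IH a /andP [ab bc]; rewrite subnKC // IH. Qed.

Lemma sumn_gaps a c : path leq a c -> (a + sumn (gaps a c))%N = last a c.
Proof.
elim: c a => [|b c IH] a /=; first by rewrite addn0.
by case/andP => ab /IH <-; rewrite addnA subnKC.
Qed.

Lemma gaps_gt0 a c : path ltn a c -> all (fun g => 0 < g)%N (gaps a c).
Proof. by elim: c a => //= b c IH a /andP [ab /IH ->]; rewrite subn_gt0 ab. Qed.

Lemma path_filter_iota (p : pred nat) k a b : (a < b)%N -> path ltn a [seq m <- iota b k | p m].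
Proof.
elim: k a b => //= k IH a b ab.
by case: (p b) => /=; [rewrite ab IH | apply: IH; apply: ltn_trans ab _].
Qed.

Arguments bval : simpl never.
Arguments pval : simpl never.

Definition signed (neg : bool) (k : nat) : int := if neg then - (k.+1)%:Z else (k.+1)%:Z.

Lemma signed_lt0 b k : (signed b k < 0) = b.
Proof. by case: b; rewrite /signed ?oppr_lt0 ?ltr0n // ltrn0. Qed.

Lemma abs_signed b k : `|signed b k|%N = k.+1.
Proof. by case: b; rewrite /signed ?abszN. Qed.

Lemma signed_inj b c k l : signed b k = signed c l -> k = l.
Proof. by move=> /(congr1 absz); rewrite !abs_signed => -[]. Qed.

Lemma signedN b k : signed (~~ b) k = - signed b k.
Proof. by case: b; rewrite /signed ?opprK. Qed.

Lemma signed_lt_same b k l : (signed b k < signed b l) = if b then (l < k)%N else (k < l)%N.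
Proof. by case: b; rewrite /signed ?ltrN2 ltz_nat ltnS. Qed.

Lemma signed_lt_cases a b k l : k != l ->
  (signed a k < signed b l) = if (k < l)%N then ~~ b else a.
Proof.
move=> kl; case: a; case: b; rewrite /signed /=.
- by rewrite ltrN2 ltz_nat ltnS; case: ltngtP kl.
- by rewrite if_same (@lt_trans _ _ 0) ?oppr_lt0 ?ltr0n.
- by rewrite if_same; apply/negbTE; rewrite -leNgt (@le_trans _ _ 0) ?oppr_le0 ?ler0n.
- by rewrite ltz_nat ltnS; case: ltngtP kl.
Qed.

Lemma signed_neq a b k l : k != l -> signed a k != signed b l.
Proof. by move=> kl; apply: contra_neq kl => /signed_inj. Qed.

Lemma bvalE n (w : bperm n) (i : 'I_n) : bval w (val i).+1 = signed (w.2 i) (w.1 i).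
Proof. by rewrite /bval valK. Qed.

Lemma perm_succ_neq n (u : 'S_n) (i j : 'I_n) : val j = (val i).+1 -> (u i : nat) != u j.
Proof.
move=> ji; apply/eqP => /val_inj /perm_inj ij.
by move: ji; rewrite ij => /n_Sn.
Qed.

Definition ascent n (w : bperm n) (k : nat) := bval w k.+1 < bval w k.+2.
Arguments ascent : simpl never.

Lemma ascentE n (w : bperm n) (i j : 'I_n) : val j = (val i).+1 ->
  ascent w (val i) = (signed (w.2 i) (w.1 i) < signed (w.2 j) (w.1 j)).
Proof. by move=> ji; rewrite /ascent bvalE -ji bvalE. Qed.

Lemma ascentNgt n (w : bperm n) (i j : 'I_n) : val j = (val i).+1 ->
  ascent w (val i) = ~~ (bval w (val i).+2 < bval w (val i).+1).
Proof.
move=> ji; rewrite /ascent ltNge le_eqVlt -{1}ji !bvalE.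
by rewrite (negbTE (signed_neq _ _ _)) // eq_sym perm_succ_neq.
Qed.

Lemma in_DesB n (w : bperm n) (i j : 'I_n) : val j = (val i).+1 ->
  (j \in DesB w) = ~~ ascent w (val i).
Proof. by move=> ji; rewrite (ascentNgt _ ji) negbK inE ji. Qed.

Definition Bdivr n (x v : bperm n) : bperm n :=
  ((v.1^-1 * x.1)%g, [ffun k => x.2 ((v.1^-1)%g k) (+) v.2 ((v.1^-1)%g k)]).

Lemma Bmul_eq n (u v x : bperm n) : (Bmul u v == x) = (u == Bdivr x v).
Proof.
case: u v x => [u1 u2] [v1 v2] [x1 x2]; rewrite /Bmul /Bdivr /=.
apply/eqP/eqP => [[<- <-]|[-> ->]]; congr pair.
- by rewrite mulKg.
- by apply/ffunP => k; rewrite !ffunE permKV addbAC addbb.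
- by rewrite mulKVg.
- by apply/ffunP => i; rewrite !ffunE permK addbC -addbA addbb addbF.
Qed.

Lemma Bdivr_perm n (x v : bperm n) i : (Bdivr x v).1 (v.1 i) = x.1 i.
Proof. by rewrite permM permK. Qed.

Lemma Bdivr_sign n (x v : bperm n) i : (Bdivr x v).2 (v.1 i) = x.2 i (+) v.2 i.
Proof. by rewrite ffunE permK. Qed.

Definition Bincr n (u : bperm n) := [forall i in DesB u, val i == 0%N].

Lemma BincrE n (u : bperm n) : Bincr u = [forall i : 'I_n, forall j : 'I_n,
  (i < j)%N ==> (signed (u.2 i) (u.1 i) < signed (u.2 j) (u.1 j))].
Proof.
apply/forall_inP/forallP => [noDes i|incr [[|k] kn] //].
  have step : {in [pred k | (k < n)%N], forall k, k.+1 \in [pred k | (k < n)%N] -> ascent u k}.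
    move=> k _ kn; have := noDes (Ordinal kn); rewrite (@in_DesB _ _ (Ordinal (ltnW kn))) //=.
    by case: ascent => // /(_ isT).
  have incr : {in [pred k | (k < n)%N] &,
                {homo (fun k => bval u k.+1) : k l / (k < l)%N >-> k < l}}.
    apply: homo_ltn_in step => [y x z|k l _ ln m /andP [_ ml]]; first exact: lt_trans.
    exact: ltn_trans ml ln.
  apply/forallP => j; apply/implyP => ij; rewrite -!bvalE.
  exact: incr (ltn_ord i) (ltn_ord j) ij.
rewrite (@in_DesB _ _ (Ordinal (ltnW kn))) //= (@ascentE _ _ (Ordinal (ltnW kn)) (Ordinal kn)) //.
by have /forallP/(_ (Ordinal kn)) := incr (Ordinal (ltnW kn)); rewrite /= ltnSn /= => ->.
Qed.

(** * The fibres of left multiplication by [X_{0}] *)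

Section Standardization.
Variables (n : nat) (y : 'I_n -> int).
Hypothesis y_inj : injective y.

Definition std_rank (i : 'I_n) : nat := #|[set j | y j < y i]|.

Lemma std_rank_lt i : (std_rank i < n)%N.
Proof.
rewrite -[n in (_ < n)%N]card_ord -cardsT; apply: proper_card; rewrite properT.
by apply/eqP => /setP/(_ i); rewrite !inE ltxx.
Qed.

Lemma std_rank_mono i j : y i < y j -> (std_rank i < std_rank j)%N.
Proof.
move=> lt; apply: proper_card; apply/properP; split.
  by apply/subsetP => k; rewrite !inE => /lt_trans; apply.
by exists i; rewrite !inE ?lt ?ltxx.
Qed.

Lemma std_rank_ltE i j : (std_rank i < std_rank j)%N = (y i < y j).
Proof.
case: (ltgtP (y i) (y j)) => [/std_rank_mono -> //| /std_rank_mono h | /y_inj ->].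
  by apply/negbTE; rewrite -leqNgt ltnW.
by rewrite ltnn.
Qed.

Lemma std_rank_inj : injective (fun i => Ordinal (std_rank_lt i)).
Proof.
move=> i j /(congr1 val) /= e.
by case: (ltgtP (y i) (y j)) => [/std_rank_mono|/std_rank_mono|/y_inj //]; rewrite e ltnn.
Qed.

Definition std_perm : 'S_n := perm std_rank_inj.

Lemma std_perm_ltE i j : (std_perm i < std_perm j)%N = (y i < y j).
Proof. by rewrite !permE std_rank_ltE. Qed.

Lemma card_lt_perm (p : 'S_n) i : #|[set j | (p j < p i)%N]| = p i.
Proof.
have -> : [set j | (p j < p i)%N] = p @^-1: [set k : 'I_n | (k < p i)%N].
  by apply/setP => j; rewrite !inE.
rewrite card_preimset; last exact: perm_inj.
by rewrite -sum1dep_card (big_ord_narrow (ltnW (ltn_ord (p i)))) sum1_card card_ord.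
Qed.

Lemma std_perm_unique (p : 'S_n) : (forall i j, (p i < p j)%N -> y i < y j) -> p = std_perm.
Proof.
move=> p_mono; apply/permP => i; apply: val_inj; rewrite permE /= -card_lt_perm.
congr #|pred_of_set _|; apply/setP => j; rewrite !inE.
apply/idP/idP => [/p_mono //|lt]; case: (ltngtP (p j) (p i)) => // [/p_mono|/val_inj/perm_inj ji].
  by move=> /(lt_trans lt); rewrite ltxx.
by move: lt; rewrite ji ltxx.
Qed.

End Standardization.

(* Signed word of [x v^-1] read along [v]: the word that must be increasing
   for [v] to contribute to [X_{0} . v] at [x]. *)
Definition twist n (x : bperm n) (s : {ffun 'I_n -> bool}) (i : 'I_n) : int :=
  signed (x.2 i (+) s i) (x.1 i).

Lemma twist_inj n (x : bperm n) s : injective (twist x s).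
Proof. by move=> i j /signed_inj /val_inj /perm_inj. Qed.

Definition fiber_rep n (x : bperm n) s : bperm n := (std_perm (@twist_inj n x s), s).

Lemma X0onlyE n (u : bperm n) : X0only n u = if Bincr u then 1 else 0.
Proof. by rewrite ffunE. Qed.

Lemma ThetaB_gsumE n (P : pred (bperm n)) (x : bperm n) :
  ThetaB (gsum P) x = \sum_(v | P v && Bincr (Bdivr x v)) 1.
Proof.
rewrite ffunE exchange_big /= [RHS]big_mkcond /=; apply: eq_bigr => v _.
under eq_bigr => u _ do rewrite Bmul_eq.
rewrite -big_mkcond big_pred1_eq X0onlyE ffunE.
by case: (P v); case: (Bincr _); rewrite ?mulr0 ?mulr1 ?mul0r.
Qed.

Lemma Bincr_Bdivr n (x v : bperm n) s : v.2 = s -> Bincr (Bdivr x v) = (v == fiber_rep x s).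
Proof.
move=> vs; rewrite BincrE; apply/idP/eqP => [incr|->].
  suff : v.1 = std_perm (@twist_inj n x s) by case: v vs {incr} => v1 v2 /= -> ->.
  apply: std_perm_unique => i j lt; have /forallP/(_ (v.1 j)) := forallP incr (v.1 i).
  by rewrite lt !Bdivr_perm !Bdivr_sign vs.
apply/forallP => i; apply/forallP => j; apply/implyP.
set p := (fiber_rep x s).1; rewrite -[i](permKV p) -[j](permKV p).
by rewrite !Bdivr_perm !Bdivr_sign std_perm_ltE.
Qed.

Lemma ThetaB_fiber n (x : bperm n) (s : {ffun 'I_n -> bool}) (Q : pred (bperm n)) :
  ThetaB (gsum (fun v => (v.2 == s) && Q v)) x = if Q (fiber_rep x s) then 1 else 0.
Proof.
rewrite ThetaB_gsumE (eq_bigl (fun v => (v == fiber_rep x s) && Q v)); last first.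
  move=> v; case: (eqVneq v.2 s) => [vs|vs] /=; first by rewrite (Bincr_Bdivr x vs) andbC.
  by case: eqP => //= ev; move: vs; rewrite ev eqxx.
case: ifP => Qv; first by rewrite (big_pred1 (fiber_rep x s)) // => v /=; case: eqP => // ->.
by rewrite big_pred0 // => v; case: eqP => // ->.
Qed.

(* [bd] is indexed by descent positions [p = val i + 1], [1 <= p < n] *)
Definition des_within n (w : bperm n) (bd : nat -> bool) :=
  [forall i : 'I_n, ((val i).+1 < n)%N && ~~ bd (val i).+1 ==> ascent w (val i)].

Lemma DesB_subsetE n (x : bperm n) bd (K : {set 'I_n}) :
  (forall i : 'I_n, (i \in K) = (val i == 0%N) || bd (val i)) ->
  (DesB x \subset K) = des_within x bd.
Proof.
move=> K_E; apply/subsetP/forallP => [sub i|asc [[|k] kn] des]; rewrite ?K_E //.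
  apply/implyP => /andP [h nb]; apply: contraT => nasc.
  by have := sub (Ordinal h); rewrite K_E (@in_DesB _ _ i) // nasc (negbTE nb) => /(_ isT).
have := asc (Ordinal (ltnW kn)); rewrite (@in_DesB _ _ (Ordinal (ltnW kn))) // in des.
by rewrite /= kn; case: (bd k.+1) des => //= /negbTE ->.
Qed.

Definition Stilde n (s : {ffun 'I_n -> bool}) (bd : nat -> bool) : galg (bperm n) :=
  gsum (fun w => (w.2 == s) && des_within w bd).

Lemma ThetaB_Stilde n (s : {ffun 'I_n -> bool}) bd :
  (forall (i : 'I_n) (h : ((val i).+1 < n)%N), ~~ bd (val i).+1 -> s (Ordinal h) = s i) ->
  ThetaB (Stilde s bd) = gsum (fun w : bperm n => des_within w bd).
Proof.
move=> s_blocks; apply/ffunP => x; rewrite ThetaB_fiber ffunE; congr (if _ then _ else _).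
apply: eq_forallb => i; case: (boolP ((val i).+1 < n)%N) => //= h.
case: (boolP (bd _)) => //= nb; rewrite !(@ascentE _ _ i (Ordinal h)) //=.
rewrite (s_blocks i h nb) signed_lt_same !std_perm_ltE /twist (s_blocks i h nb).
by case: (s i); rewrite ?addbT ?addbF // !signedN ltrN2.
Qed.

Lemma blk_succ (al : seq int) k :
  (blk al k == blk al k.+1) = (k \notin psums (map absz al)).
Proof.
rewrite /blk count_ltS -{1}[count _ _]addn0 eqn_add2l eq_sym.
by rewrite -has_pred1 has_count; case: count.
Qed.

Lemma signs_forallE n (w : bperm n) (s : {ffun 'I_n -> bool}) (f : nat -> bool) :
  (forall i : 'I_n, s i = f (val i).+1) ->
  [forall i : 'I_n, bneg w (val i).+1 == f (val i).+1] = (w.2 == s).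
Proof.
move=> sf; apply/forallP/eqP => [sgn|ws i]; last by rewrite /bneg bvalE signed_lt0 ws sf.
by apply/ffunP => i; apply/eqP; have := sgn i; rewrite /bneg bvalE signed_lt0 sf.
Qed.

Definition block_signs n (al : seq int) : {ffun 'I_n -> bool} :=
  [ffun i : 'I_n => blksign al (val i).+1].

Lemma block_signsE n (al : seq int) (i : 'I_n) : block_signs n al i = blksign al (val i).+1.
Proof. exact: ffunE. Qed.

Lemma StB_Stilde n (al : seq int) :
  StB n al = Stilde (block_signs n al) (mem (psums (map absz al))).
Proof.
apply: gsum_ext => w; rewrite (@signs_forallE _ w (block_signs n al) (blksign al)); last first.
  exact: block_signsE.
congr andb; apply: eq_forallb => i; case: (boolP ((val i).+1 < n)%N) => //= h.
by rewrite blk_succ.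
Qed.

Lemma ThetaB_StB n (al : seq int) : ThetaB (StB n al) = X0B n (map absz al).
Proof.
rewrite StB_Stilde ThetaB_Stilde => [|i h]; last first.
  by rewrite -blk_succ !block_signsE /blksign => /eqP ->.
apply/ffunP => x; rewrite !ffunE (@DesB_subsetE _ x (mem (psums (map absz al)))) //.
by move=> i; rewrite inE.
Qed.

(** * [Theta] through the signed group *)

Definition nat_in n (J : {set 'I_n}) (m : nat) := [exists j in J, val j == m].

Lemma nat_in_val n (J : {set 'I_n}) (i : 'I_n) : nat_in J (val i) = (i \in J).
Proof.
apply/existsP/idP => [[j /andP [jJ /eqP /val_inj <-]] //|iJ].
by exists i; rewrite iJ eqxx.
Qed.

Lemma nat_in0 n m : nat_in (set0 : {set 'I_n}) m = false.
Proof. by apply/existsP => -[j]; rewrite inE. Qed.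

Lemma pvalE n (u : 'S_n) (i : 'I_n) : pval u (val i).+1 = (u i).+1.
Proof. by rewrite /pval valK. Qed.

Definition pos_signs n : {ffun 'I_n -> bool} := [ffun => false].

Lemma bval_pos_signs n (u : 'S_n) k : bval (u, pos_signs n) k = pval u k.
Proof.
case: k => [|k] //; case: (ltnP k n) => kn.
  by rewrite -[k]/(val (Ordinal kn)) bvalE pvalE ffunE.
by rewrite /bval /pval insubN // -leqNgt.
Qed.

Lemma DesA_DesB n (u : 'S_n) : DesA u = DesB (u, pos_signs n).
Proof.
by apply/setP => -[[|k] kn]; rewrite !inE !bval_pos_signs ltz_nat.
Qed.

Lemma DesA_subsetE n (u : 'S_n) (J : {set 'I_n}) :
  (DesA u \subset J) = des_within (u, pos_signs n) (nat_in J).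
Proof.
rewrite -(@DesB_subsetE _ _ _ [set i | (val i == 0%N) || (i \in J)]) => [|i]; last first.
  by rewrite inE nat_in_val.
rewrite DesA_DesB; apply/subsetP/subsetP => sub i des; move/sub: (des); rewrite inE.
  by move=> ->; rewrite orbT.
by case/orP => // /eqP i0; move: des; rewrite -DesA_DesB inE i0.
Qed.

Lemma Bincr_des_within n (u : bperm n) : Bincr u = des_within u (fun _ => false).
Proof.
rewrite -(@DesB_subsetE _ u _ [set i | val i == 0%N]) => [|i]; last by rewrite inE orbF.
by apply/forall_inP/subsetP => sub i /sub; rewrite ?inE.
Qed.

Definition sign_count n (u : 'S_n) (bd : nat -> bool) : rat :=
  \sum_(e : {ffun 'I_n -> bool}) (if des_within (u, e) bd then 1 else 0).

Lemma ThetaA_XAE n (J : {set 'I_n}) (s : 'S_n) :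
  ThetaA (XA J) s = \sum_(v : 'S_n) (if DesA v \subset J then 1 else 0) *
                      (2 * (if PeakA (v^-1 * s)%g == set0 then 1 else 0)).
Proof.
rewrite ffunE exchange_big; apply: eq_bigr => v _.
rewrite -big_mkcond (eq_bigl (pred1 (v^-1 * s)%g)) => [|u]; last first.
  by apply/eqP/eqP => [<-|->]; rewrite /Amul ?mulKg ?mulKVg.
by rewrite big_pred1_eq !ffunE mulrC.
Qed.

Lemma Bdivr_pos_signs n (s v : 'S_n) e :
  Bdivr (s, e) (v, pos_signs n) = ((v^-1 * s)%g, [ffun k => e ((v^-1)%g k)]).
Proof. by congr pair; apply/ffunP => k; rewrite !ffunE addbF. Qed.

(* The right-hand side is [Theta (X_J) s], by [ThetaA_XAE] and [sign_count_nobd]. *)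
Lemma sum_ThetaB_pos_signs n (J : {set 'I_n}) (s : 'S_n) :
  \sum_(e : {ffun 'I_n -> bool}) ThetaB (Stilde (pos_signs n) (nat_in J)) (s, e) =
  \sum_(v : 'S_n) (if DesA v \subset J then 1 else 0) * sign_count (v^-1 * s)%g (fun _ => false).
Proof.
under eq_bigr => e _ do rewrite ThetaB_gsumE big_mkcond sum_pairE /=.
rewrite exchange_big; apply: eq_bigr => v _; rewrite exchange_big /=.
rewrite (bigD1 (pos_signs n)) //= [X in _ + X]big1 ?addr0 => [|t /negbTE tpos]; last first.
  by apply: big1 => e _; rewrite tpos.
rewrite eqxx -DesA_subsetE /sign_count mulr_sumr.
have shift_inj : injective (fun e : {ffun 'I_n -> bool} => [ffun k => e ((v^-1)%g k)]).
  by move=> e e' /ffunP eq_e; apply/ffunP => k; have := eq_e (v k); rewrite !ffunE permK.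
rewrite [RHS](reindex_inj shift_inj); apply: eq_bigr => e _.
by rewrite Bdivr_pos_signs Bincr_des_within; case: (DesA v \subset J); rewrite ?mul1r ?mul0r.
Qed.

Section SignCount.
Variables (n : nat) (u : 'S_n) (bd : nat -> bool).
Local Notation pv := (pval u).

(* The ascent required at [p-1], resp. [p], forces the sign at [p] (0-based) to be
   positive, resp. negative. *)
Definition forced_pos (p : nat) := [&& (0 < p)%N, ~~ bd p & (pv p < pv p.+1)%N].
Definition forced_neg (p : nat) := [&& (p.+1 < n)%N, ~~ bd p.+1 & (pv p.+2 < pv p.+1)%N].

Lemma ascent_pos_signs e (i j : 'I_n) : val j = (val i).+1 ->
  ascent (u, e) (val i) = if (u i < u j)%N then ~~ e j else e i.
Proof. by move=> ji; rewrite (ascentE _ ji) signed_lt_cases // perm_succ_neq. Qed.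

Lemma pv_ltE (i j : 'I_n) : (pv (val i).+1 < pv (val j).+1)%N = (u i < u j)%N.
Proof. by rewrite !pvalE. Qed.

Lemma des_within_forced e : des_within (u, e) bd =
  [forall p : 'I_n, (forced_pos p ==> ~~ e p) && (forced_neg p ==> e p)].
Proof.
apply/forallP/forallP => [asc p|frc i]; first (apply/andP; split; apply/implyP).
- case: p => [[|k] kn] //= /and3P [_ nb lt].
  set i := Ordinal (ltnW kn); have := asc i.
  by rewrite /= kn nb (@ascent_pos_signs _ i (Ordinal kn)) // -(@pv_ltE i (Ordinal kn)) lt.
- move=> /and3P [h nb lt]; have := asc p; rewrite h nb (@ascent_pos_signs _ p (Ordinal h)) //=.
  by rewrite -(@pv_ltE p (Ordinal h)) ltnNge ltnW.
apply/implyP => /andP [h nb]; rewrite (@ascent_pos_signs _ i (Ordinal h)) //.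
case: ltngtP => [lt|gt|/val_inj/perm_inj/(congr1 val)/n_Sn //].
  case/andP: (frc (Ordinal h)) => + _.
  by rewrite /forced_pos /= nb (@pv_ltE i (Ordinal h)) lt; apply.
by case/andP: (frc i) => _; rewrite /forced_neg h nb (@pv_ltE (Ordinal h) i) gt; apply.
Qed.

Lemma sign_count_prod :
  sign_count u bd = (\prod_(p < n) ((~~ forced_pos p) + (~~ forced_neg p)))%N%:R.
Proof.
rewrite natr_prod; transitivity (\prod_(p < n) \sum_(b : bool)
    (if (forced_pos p ==> ~~ b) && (forced_neg p ==> b) then 1 else 0 : rat)).
  rewrite bigA_distr_bigA; apply: eq_bigr => e _.
  by rewrite prod_indicator des_within_forced.
by apply: eq_bigr => p _; rewrite big_bool /=; case: forced_pos; case: forced_neg.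
Qed.

End SignCount.

Section SignCountPeaks.
Variables (n : nat) (u : 'S_n) (J : {set 'I_n}).
Hypotheses (n_gt0 : (0 < n)%N) (J_pos : forall j, j \in J -> (0 < val j)%N).
Local Notation fpos := (forced_pos u (nat_in J)).
Local Notation fneg := (forced_neg u (nat_in J)).

Lemma J_sub_nonzero : J \subset [set~ Ordinal n_gt0].
Proof. by apply/subsetP => j /J_pos; rewrite !inE; apply: contraTneq => ->. Qed.

Lemma card_J_le : (#|J| <= n.-1)%N.
Proof.
rewrite -[n in n.-1]card_ord -(cardsC1 (Ordinal n_gt0)).
exact/subset_leq_card/J_sub_nonzero.
Qed.

Lemma sum_forced : (\sum_(p < n) (fpos p + fneg p))%N = (n.-1 - #|J|)%N.
Proof.
pose fdesc q := [&& (0 < q)%N, (q < n)%N, ~~ nat_in J q & (pval u q.+1 < pval u q)%N].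
rewrite big_split /=; have -> : (\sum_(p < n) fneg p = \sum_(p < n) fdesc p)%N.
  by rewrite -(@sum_ord_shift n fdesc) // /fdesc ltnn andbF.
rewrite -big_split /= (eq_bigr (fun q : 'I_n => (q \in [set~ Ordinal n_gt0] :\: J) : nat)).
  by rewrite sum_nat_indicator cardsE cardsD (setIidPr J_sub_nonzero) cardsC1 card_ord.
move=> q _; rewrite /fdesc /forced_pos !inE nat_in_val -val_eqE.
case: q => [[|k] kn] /=; first by rewrite andbF.
rewrite kn andbT.
rewrite (pvalE u (Ordinal (ltnW kn))) (pvalE u (Ordinal kn)) !ltnS.
by case: (_ \in J); case: ltngtP => // /val_inj/perm_inj/(congr1 val)/n_Sn.
Qed.

Lemma inJJ1E (f : 'I_n) k : val f = k.+1 -> inJJ1 J f = nat_in J k.+1 || nat_in J k.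
Proof.
by move=> fk; rewrite /inJJ1 -nat_in_val fk; congr orb; apply: eq_existsb => j; rewrite eqSS.
Qed.

Lemma conflict_peak (p : 'I_n) (h : ((val p).+1 < n)%N) :
  fpos p && fneg p = (Ordinal h \in PeakA u) && ~~ inJJ1 J (Ordinal h).
Proof.
rewrite /forced_pos /forced_neg inE (@inJJ1E (Ordinal h) p) //= h ltnS negb_or.
by case: (0 < val p)%N; case: (nat_in J _); case: (nat_in J _);
  rewrite /= ?andbF ?andbT.
Qed.

Lemma no_conflictE :
  [forall p : 'I_n, ~~ (fpos p && fneg p)] = [forall f in PeakA u, inJJ1 J f].
Proof.
apply/forallP/forall_inP => [noc [[|k] kn] peak|peaks p].
- by move: peak; rewrite inE.
- have := noc (Ordinal (ltnW kn)).
  by rewrite (@conflict_peak (Ordinal (ltnW kn)) kn) peak => /negbNE.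
case: (ltnP (val p).+1 n) => [h|]; first by rewrite conflict_peak; apply/negP => /andP [/peaks ->].
by rewrite leqNgt /forced_neg => /negbTE ->; rewrite andbF.
Qed.

Lemma prod_forced : (\prod_(p < n) ((~~ fpos p) + (~~ fneg p)))%N =
  (2 ^ (1 + #|J|) * [forall p : 'I_n, ~~ (fpos p && fneg p)])%N.
Proof.
case: (boolP [forall p, _]) => [/forallP noc|/forallPn [p /negPn /andP [fp fn]]]; last first.
  by rewrite muln0 (bigD1 p) //= fp fn.
have one_forced (p : 'I_n) : (fpos p + fneg p <= 1)%N by move: (noc p); case: fpos; case: fneg.
rewrite muln1 (eq_bigr (fun p : 'I_n => 2 ^ (1 - (fpos p + fneg p)))%N) => [|p _]; last first.
  by move: (noc p); case: fpos; case: fneg.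
rewrite -expn_sum (sumnB _ (fun p _ => one_forced p)) sum_forced sum_nat_const card_ord muln1.
by congr (2 ^ _)%N; have := card_J_le; lia.
Qed.

Lemma sign_countE :
  sign_count u (nat_in J) = (2 ^ (1 + #|J|) * [forall f in PeakA u, inJJ1 J f])%N%:R.
Proof. by rewrite sign_count_prod prod_forced no_conflictE. Qed.

End SignCountPeaks.

Lemma sign_count_nobd n (n_gt0 : (0 < n)%N) (u : 'S_n) :
  sign_count u (fun _ => false) = 2 * (if PeakA u == set0 then 1 else 0).
Proof.
have -> : sign_count u (fun _ => false) = sign_count u (nat_in (set0 : {set 'I_n})).
  by apply: eq_bigr => e _; congr (if _ then _ else _); apply: eq_forallb => i; rewrite nat_in0.
rewrite sign_countE // => [|j]; last by rewrite inE.
have -> : [forall f in PeakA u, inJJ1 (set0 : {set 'I_n}) f] = (PeakA u == set0).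
  apply/forall_inP/eqP => [|-> f]; last by rewrite inE.
  move=> noJ; apply/setP => f; rewrite in_set0; apply/negbTE/negP => /noJ.
  by rewrite /inJJ1 in_set0 => /existsP [j]; rewrite in_set0.
by rewrite cards0 expn1 natrM; case: eqP; rewrite ?mulr1 ?mulr0.
Qed.

Lemma peakset_PeakA n (u : 'S_n) : peakset (PeakA u).
Proof.
apply/andP; split; first by apply/forall_inP => i; rewrite inE => /and3P [].
apply/forall_inP => i; rewrite inE => /and3P [_ lti _].
apply/forall_inP => j; rewrite inE => /and3P [_ _ gtj].
by apply: contraTneq lti => ->; rewrite -leqNgt; exact: ltnW.
Qed.

Theorem ThetaA_XA n (n_gt0 : (0 < n)%N) (J : {set 'I_n})
    (J_pos : forall j, j \in J -> (0 < val j)%N) :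
  ThetaA (XA J) = gscale (2 ^ (1 + #|J|))%:R
    (\sum_(F : {set 'I_n} | peakset F && [forall f in F, inJJ1 J f]) PA F).
Proof.
apply/ffunP => s; rewrite ThetaA_XAE.
under eq_bigr => v _ do rewrite -sign_count_nobd //.
rewrite -sum_ThetaB_pos_signs.
rewrite (eq_bigr (fun e => if des_within (s, e) (nat_in J) then 1 else 0)) => [|e _]; last first.
  by rewrite ThetaB_Stilde ?ffunE // => i h _; rewrite !ffunE.
rewrite -/(sign_count s (nat_in J)) sign_countE // !ffunE sum_ffunE.
under eq_bigr => F _ do rewrite ffunE.
rewrite sum_if_eq peakset_PeakA natrM.
by case: [forall f in PeakA s, inJJ1 J f]; rewrite ?mulr1 ?mulr0.
Qed.

(** * The image of [Theta+-] *)

Definition fits_pattern n (x : bperm n) (a d : nat -> bool) :=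
  [forall i : 'I_n, ((val i).+1 < n)%N ==>
     (a (val i) ==> ascent x (val i)) && (d (val i) ==> ~~ ascent x (val i))].

Definition Ypattern n (a d : nat -> bool) : galg (bperm n) :=
  gsum (fun x => fits_pattern x a d).

Lemma Ypattern_XB n (a d : nat -> bool) :
    (forall i : 'I_n, ((val i).+1 < n)%N -> d (val i) = false) ->
  Ypattern n a d = XB [set i : 'I_n | (val i == 0%N) || ~~ a (val i).-1].
Proof.
move=> no_d; apply/ffunP => x; rewrite !ffunE (@DesB_subsetE _ x (fun m => ~~ a m.-1)) => [|i].
  congr (if _ then _ else _); apply: eq_forallb => i.
  by case: (boolP ((val i).+1 < n)%N) => //= h; rewrite negbK no_d // andbT.
by rewrite inE.
Qed.

Section PatternUpdate.
Variables (n : nat) (x : bperm n) (a d : nat -> bool) (i0 : 'I_n).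
Hypothesis i0_lt : ((val i0).+1 < n)%N.

Lemma fits_pattern_drop_des : d (val i0) ->
  fits_pattern x a d = fits_pattern x a (fun m => d m && (m != val i0)) && ~~ ascent x (val i0).
Proof.
move=> d0; apply/forallP/andP => [fits|[/forallP fits' des] i].
  split; last by have := fits i0; rewrite i0_lt d0 /= => /andP [].
  apply/forallP => i; have := fits i.
  by case: (_ < n)%N; case: (a _); case: (d _); case: (_ != _); case: ascent.
have := fits' i; case: (eqVneq (val i) (val i0)) => [->|_]; last by rewrite andbT.
by rewrite i0_lt des !implybT !andbT.
Qed.

Lemma fits_pattern_add_asc :
  fits_pattern x (fun m => a m || (m == val i0)) d = fits_pattern x a d && ascent x (val i0).
Proof.
apply/forallP/andP => [fits|[/forallP fits' asc] i].
  split; last by have := fits i0; rewrite i0_lt eqxx orbT /= => /andP [].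
  apply/forallP => i; have := fits i.
  by case: (_ < n)%N; case: (a _); case: (d _); case: (_ == _); case: ascent.
have := fits' i; case: (eqVneq (val i) (val i0)) => [->|_]; last by rewrite orbF.
by rewrite i0_lt asc !orbT !implybT.
Qed.

End PatternUpdate.

(* Inclusion-exclusion on the prescribed descents. *)
Lemma Ypattern_span n (n_gt0 : (0 < n)%N) (a d : nat -> bool) : inspan (@isI0 n) (Ypattern n a d).
Proof.
move dk : #|[set i : 'I_n | ((val i).+1 < n)%N && d (val i)]| => k.
elim: k a d dk => [|k IH] a d dk.
  apply/inspan1; exists [set i : 'I_n | (val i == 0%N) || ~~ a (val i).-1]; split.
    by apply/existsP; exists (Ordinal n_gt0); rewrite inE eqxx.
  apply: Ypattern_XB => i h; apply/negbTE/negP => di.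
  suff : (0 < #|[set i : 'I_n | ((val i).+1 < n)%N && d (val i)]|)%N by rewrite dk.
  by apply/card_gt0P; exists i; rewrite inE h di.
have [i0] : exists i0, i0 \in [set i : 'I_n | ((val i).+1 < n)%N && d (val i)].
  by apply/set0Pn; rewrite -card_gt0 dk.
rewrite inE => /andP [i0_lt d0]; pose d' m := d m && (m != val i0).
have d'k : #|[set i : 'I_n | ((val i).+1 < n)%N && d' (val i)]| = k.
  move: dk; rewrite (cardsD1 i0) inE i0_lt d0 => -[<-]; apply: eq_card => i.
  by rewrite !inE /d' -val_eqE; case: eqP => [->|]; rewrite ?andbF ?andbT.
have drop_d0 (x : bperm n) : fits_pattern x a d = fits_pattern x a d' && ~~ ascent x (val i0).
  exact: fits_pattern_drop_des.
have add_a0 (x : bperm n) : fits_pattern x (fun m => a m || (m == val i0)) d' =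
                fits_pattern x a d' && ascent x (val i0).
  exact: fits_pattern_add_asc.
rewrite /Ypattern (gsum_split drop_d0) -(gsum_ext add_a0).
by apply/inspanD/inspanZ; apply: IH.
Qed.

(* Which ascents and descents of [x] the condition defining [T_al] imposes on
   the representative [fiber_rep x] at positions [k+1], [k+2]. *)
Definition asc_req (al : seq int) (k : nat) :=
  let same := blk al k.+1 == blk al k.+2 in
  if blksign al k.+1 == blksign al k.+2 then same (+) blksign al k.+1 else same.
Definition des_req (al : seq int) (k : nat) :=
  let same := blk al k.+1 == blk al k.+2 in
  if blksign al k.+1 == blksign al k.+2 then ~~ (same (+) blksign al k.+1) else same.

Lemma twist_ltE n (x : bperm n) (s : {ffun 'I_n -> bool}) (i j : 'I_n) :
  val j = (val i).+1 -> s j = s i ->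
  (twist x s i < twist x s j) = ascent x (val i) (+) s i.
Proof.
move=> ji sji; rewrite /twist sji; case: (s i); rewrite ?addbT ?addbF; last exact/esym/ascentE.
by rewrite !signedN ltrN2 (ascentNgt _ ji) negbK -{1}ji !bvalE.
Qed.

Lemma ThetaB_TB n (al : seq int) : ThetaB (TB n al) = Ypattern n (asc_req al) (des_req al).
Proof.
have -> : TB n al = gsum (fun w => (w.2 == block_signs n al) &&
    [forall i : 'I_n, ((val i).+1 < n)%N ==>
       ((blk al (val i).+1 == blk al (val i).+2) ==
        ((bneg w (val i).+1 == bneg w (val i).+2) &&
         (`|bval w (val i).+1| < `|bval w (val i).+2|)%N))]).
  apply: gsum_ext => w; rewrite (@signs_forallE _ w (block_signs n al) (blksign al)) //.
  exact: block_signsE.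
apply/ffunP => x; rewrite ThetaB_fiber ffunE; congr (if _ then _ else _).
apply: eq_forallb => i; case: (boolP ((val i).+1 < n)%N) => //= h.
have ji : val (Ordinal h) = (val i).+1 by [].
rewrite /bneg -{2 4}ji !bvalE !signed_lt0 !abs_signed ltnS std_perm_ltE /=.
rewrite /asc_req /des_req (block_signsE _ i) (block_signsE _ (Ordinal h)) /=.
case: (eqVneq (blksign al (val i).+1) (blksign al (val i).+2)) => [bs_eq|_] /=; last first.
  by case: (blk _ _ == _); case: ascent.
rewrite (twist_ltE _ ji) ?block_signsE //.
by case: (blk _ _ == _); case: (blksign _ _); case: ascent.
Qed.

Lemma ThetaB_TB_span n (n_gt0 : (0 < n)%N) (al : seq int) : inspan (@isI0 n) (ThetaB (TB n al)).
Proof. by rewrite ThetaB_TB; apply: Ypattern_span. Qed.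

Section BoundaryComposition.
Variables (n : nat) (L : {set 'I_n}).
Hypothesis n_gt0 : (0 < n)%N.

(* The positive composition [beta] of [n] with [J_beta = L]. *)
Definition bounds : seq nat := [seq m <- iota 1 n | nat_in L m || (m == n)].
Definition comp_of_set : seq int := [seq Posz g | g <- gaps 0 bounds].

Lemma bounds_path : path ltn 0 bounds.
Proof. exact: path_filter_iota. Qed.

Lemma bounds_path_leq : path leq 0 bounds.
Proof. by apply: sub_path bounds_path => x y /ltnW. Qed.

Lemma bounds_last : last 0%N bounds = n.
Proof.
rewrite /bounds; have -> : iota 1 n = rcons (iota 1 n.-1) n.
  by rewrite -cats1 -{1}(prednK n_gt0) -(addn1 n.-1) iotaD add1n prednK.
by rewrite filter_rcons eqxx orbT last_rcons.
Qed.

Lemma psums_comp_of_set : psums (map absz comp_of_set) = bounds.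
Proof. by rewrite -map_comp map_id_in // /psums scanl_gaps // bounds_path_leq. Qed.

Lemma mem_psums_comp_of_set m : (0 < m < n)%N ->
  (m \in psums (map absz comp_of_set)) = nat_in L m.
Proof.
case/andP => m_gt0 mn; rewrite psums_comp_of_set mem_filter mem_iota m_gt0 add1n ltnS.
by rewrite (ltnW mn) (ltn_eqF mn) orbF !andbT.
Qed.

Lemma blksign_comp_of_set k : blksign comp_of_set k = false.
Proof. by rewrite /blksign /comp_of_set; elim: (gaps 0 bounds) (blk _ k) => [|g s IH] []. Qed.

Lemma signed_comp_of_set : signed_comp n comp_of_set.
Proof.
split; first by rewrite all_map; apply: sub_all (gaps_gt0 bounds_path) => g; rewrite /= -lt0n.
by rewrite big_map -sumnE -[RHS]bounds_last -(sumn_gaps bounds_path_leq).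
Qed.

End BoundaryComposition.

Lemma ThetaB_TB_comp_of_set n (n_gt0 : (0 < n)%N) (L : {set 'I_n})
    (L_pos : forall j, j \in L -> (0 < val j)%N) :
  ThetaB (TB n (comp_of_set L)) = gsum (fun x => [set j in DesB x | (0 < val j)%N] == L).
Proof.
rewrite ThetaB_TB; apply/ffunP => x; rewrite !ffunE; congr (if _ then _ else _).
have fits_at (i j : 'I_n) : val j = (val i).+1 ->
    (asc_req (comp_of_set L) (val i) ==> ascent x (val i)) &&
    (des_req (comp_of_set L) (val i) ==> ~~ ascent x (val i)) = ((j \in DesB x) == (j \in L)).
  move=> ji; rewrite /asc_req /des_req !blksign_comp_of_set /= addbF blk_succ.
  rewrite -ji mem_psums_comp_of_set; last by rewrite ltn_ord ji.
  rewrite nat_in_val (in_DesB _ ji).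
  by case: (j \in L); case: ascent.
apply/forallP/eqP => [fits|eqL i].
  apply/setP => -[[|k] kn]; rewrite !inE /=.
    by rewrite andbF; apply/esym/negbTE/negP => /L_pos.
  set i := Ordinal (ltnW kn); have := fits i.
  by rewrite /= kn (fits_at i (Ordinal kn)) // !inE /= andbT => /eqP.
apply/implyP => h; rewrite (fits_at i (Ordinal h)) // -eqL.
by rewrite [in X in _ == X]inE andbT.
Qed.

Lemma XB_decomp n (K : {set 'I_n}) : (forall i : 'I_n, val i = 0%N -> i \in K) ->
  XB K = \sum_(L : {set 'I_n} | [forall j in L, (0 < val j)%N] && (L \subset K))
           gsum (fun x => [set j in DesB x | (0 < val j)%N] == L).
Proof.
move=> K0; apply/ffunP => x; rewrite sum_ffunE ffunE.
under eq_bigr => L _ do rewrite ffunE.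
rewrite sum_if_eq; congr (if _ then _ else _).
have -> : [forall j in [set j in DesB x | (0 < val j)%N], (0 < val j)%N].
  by apply/forall_inP => j; rewrite inE => /andP [].
apply/subsetP/subsetP => sub j; first by rewrite inE => /andP [/sub].
by case: j => [[|k] kn] des; [apply: K0 | apply: sub; rewrite inE des].
Qed.

Theorem ThetaB_image n (n_gt0 : (0 < n)%N) (y : galg (bperm n)) :
  (exists a, inspan (@isTgen n) a /\ y = ThetaB a) <-> inspan (@isI0 n) y.
Proof.
apply: linear_image_span; first exact: gmul_linear.
  by move=> _ [al [_ ->]]; apply: ThetaB_TB_span.
move=> _ [K [/existsP [i0 /andP [i0K /eqP i00]]] ->].
rewrite XB_decomp => [|i i0']; last by rewrite (_ : i = i0) //; apply: val_inj; rewrite i0' i00.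
apply: inspan_sum => L /andP [/forall_inP L_pos _]; apply: inspan1.
exists (TB n (comp_of_set L)); last by rewrite ThetaB_TB_comp_of_set.
by exists (comp_of_set L); split => //; apply: signed_comp_of_set.
Qed.

(** * The image of [Theta] *)

Definition weight n (F : {set 'I_n}) : nat := \sum_(i in F) val i.

Lemma peakset_gt1 n (F : {set 'I_n}) f : peakset F -> f \in F -> (1 < val f)%N.
Proof. by case/andP => /forall_inP gt1 _ /gt1. Qed.

Lemma peakset_nsucc n (F : {set 'I_n}) f g : peakset F -> f \in F -> g \in F -> val f != (val g).+1.
Proof. by case/andP => _ /forall_inP nsucc /nsucc /forall_inP nsucc' /nsucc'. Qed.

Section WeightDecrease.
Variables (n : nat) (F G : {set 'I_n}).
Hypotheses (peakF : peakset F) (peakG : peakset G) (neqGF : G != F).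
Hypothesis G_near_F : forall g, g \in G -> (g \in F) || nat_in F (val g).+1.

Definition shift_into_F (g : 'I_n) : 'I_n :=
  if g \in F then g else odflt g [pick f in F | val f == (val g).+1].

Lemma shift_into_F_succ g : g \in G -> g \notin F ->
  (shift_into_F g \in F) && (val (shift_into_F g) == (val g).+1).
Proof.
move=> gG gF; rewrite /shift_into_F (negbTE gF).
have := G_near_F gG; rewrite (negbTE gF) => /existsP [f fF].
by case: pickP => [f' /andP [-> ->] //|/(_ f)]; rewrite fF.
Qed.

Lemma shift_into_F_in g : g \in G -> shift_into_F g \in F.
Proof.
move=> gG; case: (boolP (g \in F)) => gF; first by rewrite /shift_into_F gF.
by case/andP: (shift_into_F_succ gG gF).
Qed.

Lemma shift_into_F_le g : g \in G -> (val g <= val (shift_into_F g))%N.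
Proof.
move=> gG; case: (boolP (g \in F)) => gF; first by rewrite /shift_into_F gF.
by case/andP: (shift_into_F_succ gG gF) => _ /eqP ->.
Qed.

Lemma shift_into_F_inj : {in G &, injective shift_into_F}.
Proof.
have mixed g1 g2 : g1 \in G -> g2 \in G -> g1 \in F -> g2 \notin F ->
    shift_into_F g1 != shift_into_F g2.
  move=> g1G g2G g1F g2F; case/andP: (shift_into_F_succ g2G g2F) => _ /eqP e.
  apply: contraNneq (peakset_nsucc peakG g1G g2G) => e'.
  by rewrite -e -e' /shift_into_F g1F.
move=> g1 g2 g1G g2G; case: (boolP (g1 \in F)) => g1F; case: (boolP (g2 \in F)) => g2F.
- by rewrite /shift_into_F g1F g2F.
- by move/eqP; rewrite (negbTE (mixed _ _ g1G g2G g1F g2F)).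
- by move/esym/eqP; rewrite (negbTE (mixed _ _ g2G g1G g2F g1F)).
case/andP: (shift_into_F_succ g1G g1F) => _ /eqP e1.
case/andP: (shift_into_F_succ g2G g2F) => _ /eqP e2.
by move=> e; apply/val_inj/succn_inj; rewrite -e1 -e2 e.
Qed.

Lemma weight_lt : (weight G < weight F)%N.
Proof.
have sub : [set shift_into_F g | g in G] \subset F.
  by apply/subsetP => f /imsetP [g gG ->]; apply: shift_into_F_in.
have [sGF|/subsetPn [g gG gF]] := boolP (G \subset F).
  have /properP [_ [f fF fG]] : G \proper F by rewrite properEneq neqGF.
  rewrite /weight [X in (_ < X)%N](big_setID G) (setIidPr sGF) /= -[X in (X < _)%N]addn0 ltn_add2l.
  by rewrite (big_setD1 f) ?inE ?fF ?fG //= ltn_addr // ltnW // (peakset_gt1 peakF fF).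
apply: leq_trans (_ : weight [set shift_into_F g | g in G] <= weight F)%N.
  rewrite /weight (big_imset _ shift_into_F_inj) (big_setD1 g) //= (big_setD1 g gG) /=.
  rewrite -addSn leq_add //; first by case/andP: (shift_into_F_succ gG gF) => _ /eqP ->.
  by apply: leq_sum => h /setD1P [_ /shift_into_F_le].
rewrite /weight [X in (_ <= X)%N](big_setID [set shift_into_F g | g in G]).
by rewrite (setIidPr sub) leq_addr.
Qed.

End WeightDecrease.

Section PeakBasis.
Variables (n : nat) (F : {set 'I_n}).
Hypothesis peakF : peakset F.

(* [F - 1]: the smallest [J] with [F] contained in [J \cup (J+1)] *)
Definition pred_set : {set 'I_n} := [set j : 'I_n | nat_in F (val j).+1].

Lemma pred_set_pos j : j \in pred_set -> (0 < val j)%N.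
Proof.
by rewrite inE => /existsP [f /andP [fF /eqP fj]]; have := peakset_gt1 peakF fF; rewrite fj.
Qed.

Lemma inJJ1_pred_set f : inJJ1 pred_set f = nat_in F (val f).+1 || (f \in F).
Proof.
rewrite /inJJ1 inE; congr orb; apply/existsP/idP => [[j /andP [jF /eqP fj]]|fF].
  by move: jF; rewrite ?inE fj nat_in_val.
have f_gt0 := ltnW (peakset_gt1 peakF fF).
exists (Ordinal (leq_ltn_trans (leq_pred (val f)) (ltn_ord f))).
by rewrite inE /= prednK // nat_in_val fF eqxx.
Qed.

End PeakBasis.

Lemma PA_in_image n (n_gt0 : (0 < n)%N) (F : {set 'I_n}) :
  peakset F -> inspan (image_of (@ThetaA n) (@isXA n)) (PA F).
Proof.
have [k] := ubnP (weight F); elim: k F => // k IH F /ltnSE wFk peakF.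
set J := pred_set F; have J_pos := pred_set_pos peakF.
pose c : rat := (2 ^ (1 + #|J|))%:R; have c_neq0 : c != 0 by rewrite pnatr_eq0 expn_eq0.
have FJ : peakset F && [forall f in F, inJJ1 J f].
  by rewrite peakF; apply/forall_inP => f fF; rewrite inJJ1_pred_set // fF orbT.
have -> : PA F = gscale c^-1 (ThetaA (XA J)) + gscale (-1)
    (\sum_(G : {set 'I_n} | (peakset G && [forall g in G, inJJ1 J g]) && (G != F)) PA G).
  rewrite ThetaA_XA // (bigD1 F) //=; apply/ffunP => w; rewrite !ffunE.
  by rewrite mulrA mulVf // mul1r mulN1r addrK.
apply/inspanD/inspanZ/inspan_sum => [|G /andP [/andP [peakG /forall_inP GJ] neqGF]].
  by apply/inspanZ/inspan1; exists (XA J) => //; exists J.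
apply: IH => //; apply: leq_trans wFk; apply: weight_lt => // g /GJ.
by rewrite inJJ1_pred_set // orbC.
Qed.

Theorem ThetaA_image n (n_gt0 : (0 < n)%N) (y : galg 'S_n) :
  (exists a, inspan (@isXA n) a /\ y = ThetaA a) <-> inspan (@isPA n) y.
Proof.
apply: linear_image_span => [|_ [J [J_pos ->]]|_ [F [peakF ->]]]; first exact: gmul_linear.
  rewrite ThetaA_XA //; apply/inspanZ/inspan_sum => G /andP [peakG _].
  by apply: inspan1; exists G.
exact: PA_in_image.
Qed.

Unset Implicit Arguments.

Theorem proposition7p12 (n : nat) (hn : (0 < n)%N) :
  (forall al : seq int, signed_comp n al ->
     ThetaB (StB n al) = X0B n (map absz al)) /\
  (forall J : {set 'I_n}, (forall j, j \in J -> 0 < val j)%N ->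
     ThetaA (XA J) =
     gscale (2 ^ (1 + #|J|))%:R
       (\sum_(F : {set 'I_n} | peakset F && [forall f in F, inJJ1 J f]) PA F)) /\
  (forall y : galg (bperm n),
     (exists a, inspan (@isTgen n) a /\ y = ThetaB a) <-> inspan (@isI0 n) y) /\
  (forall y : galg 'S_n,
     (exists a, inspan (@isXA n) a /\ y = ThetaA a) <-> inspan (@isPA n) y).
Proof.
split; first by move=> al _; apply: ThetaB_StB.
split; first exact: ThetaA_XA.
by split; [apply: ThetaB_image | apply: ThetaA_image].
Qed.
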